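(* Let $k\ge 2$ be an even integer, and let $S_k$ and $\mathcal D$ be as defined in the context. Let $T$ be a minimum-length $\mathcal D$-monotone geometric spanning tree of $S_k$, and let $x$ be a polygon vertex (i.e. $x\in S_k\setminus\{o\}$). Then $\deg_T(x)\le 2$.
   Context: Let $k\ge 2$ be even. Let $\mathcal D=\{d_1,\dots,d_k\}$ where $d_i=(\cos((i-1)\pi/k),\sin((i-1)\pi/k))$, so consecutive directions differ by angle $\pi/k$. The lines through the origin $o$ orthogonal to the $d_i$ partition the plane into $2k$ wedges $W_0,\dots,W_{2k-1}$, where (since $k$ is even) $W_i$ is the wedge of polar angles in $[i\pi/k,(i+1)\pi/k]$. Let $S_k=\{o\}\cup\{v_0,\dots,v_{2k-1}\}$, where $v_i$ is the point on the unit circle at polar angle $i\pi/k+\frac{2\pi}{3k}$ (the second angle-trisector of $W_i$ in counterclockwise order); thus $v_0,\dots,v_{2k-1}$ form a regular $2k$-gon centered at $o$, and these are called polygon vertices. A geometric path $\langle p_1,\dots,p_r\rangle$ is $d$-monotone if no two of its vertices lie on a common line orthogonal to $d$ and $\langle p_1,d\rangle,\dots,\langle p_r,d\rangle$ is strictly increasing or strictly decreasing. A geometric spanning tree of $S$ is a tree with vertex set $S$ whose edges are straight segments; its length is the sum of Euclidean edge lengths; it is $\mathcal D$-monotone if for every pair of vertices $u,v$ there is $d\in\mathcal D$ with the tree path from $u$ to $v$ $d$-monotone. *)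

From Stdlib Require Import Reals.
From mathcomp Require Import all_boot.

Set Implicit Arguments.
Unset Strict Implicit.
Unset Printing Implicit Defensive.

Local Open Scope R_scope.

(* Vertices of S_k are indexed by 'I_(2k+1):
   index i < 2k  is the polygon vertex v_i (polar angle i*pi/k + 2pi/(3k)),
   index 2k      is the origin o. *)
Definition vtx (k : nat) := ordinal (2 * k)%N.+1.

Definition pt := (R * R)%type.

Definition pos (k : nat) (i : vtx k) : pt :=
  if (nat_of_ord i < 2 * k)%N then
    let th := INR i * PI / INR k + 2 * PI / (3 * INR k) in (cos th, sin th)
  else (0, 0).

(* Direction d_{j+1} = (cos (j pi/k), sin (j pi/k)), for j < k. *)
Definition dir (k j : nat) : pt := (cos (INR j * PI / INR k), sin (INR j * PI / INR k)).

Definition dot (p q : pt) : R := fst p * fst q + snd p * snd q.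

Definition dist (p q : pt) : R :=
  sqrt ((fst p - fst q) ^ 2 + (snd p - snd q) ^ 2).

Fixpoint strict_incr (l : list R) : Prop :=
  match l with
  | a :: ((b :: _) as t) => a < b /\ strict_incr t
  | _ => True
  end.

Fixpoint strict_decr (l : list R) : Prop :=
  match l with
  | a :: ((b :: _) as t) => a > b /\ strict_decr t
  | _ => True
  end.

Definition d_monotone (d : pt) (ps : list pt) : Prop :=
  (forall i j, (i < size ps)%N -> (j < size ps)%N -> i <> j ->
     dot (nth (0,0) ps i) d <> dot (nth (0,0) ps j) d) /\
  (strict_incr (map (fun p => dot p d) ps) \/
   strict_decr (map (fun p => dot p d) ps)).

Definition is_tree (T : finType) (E : rel T) : Prop :=
  symmetric E /\ irreflexive E /\
  (forall u v : T, connect E u v) /\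
  ~ (exists c : seq T, [/\ uniq c, (2 < size c)%N & cycle E c]).

(* p (with u prepended) is a simple path from u to v in E; in a tree this is
   the (unique) tree path from u to v. *)
Definition simple_path (T : finType) (E : rel T) (u v : T) (p : seq T) : Prop :=
  path E u p /\ last u p = v /\ uniq (u :: p).

Definition D_monotone_tree (k : nat) (E : rel (vtx k)) : Prop :=
  is_tree E /\
  forall u v : vtx k, exists j : nat, (j < k)%N /\
    forall p : seq (vtx k), simple_path E u v p ->
      d_monotone (dir k j) (map (@pos k) (u :: p)).

Definition tree_length (k : nat) (E : rel (vtx k)) : R :=
  \big[Rplus/0]_(u : vtx k)
    \big[Rplus/0]_(v : vtx k | (nat_of_ord u < nat_of_ord v)%N && E u v)
       dist (pos u) (pos v).

Definition min_D_monotone_tree (k : nat) (E : rel (vtx k)) : Prop :=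
  D_monotone_tree E /\
  forall E' : rel (vtx k), D_monotone_tree E' -> tree_length E <= tree_length E'.

Definition degree (T : finType) (E : rel T) (x : T) : nat := #|[set y | E x y]|.

(* Place [x] at index 0 and record, for every other vertex [w], the sector of the segment
   [x w], i.e. its direction; these sectors fill a half-turn.  If [w] and [w'] lie in different
   branches of the tree at [x], the tree path from [w] to [w'] passes through [x] and is monotone
   in some direction [t]; read backwards, its part in the branch of [w] is monotone in [-t].  This
   separates branches: the sector of [w] lies on one side of the sectors of the whole branch of
   [w'].  So if [x] had neighbours [a], [b], [c] with sectors in increasing order, the branch
   through [b] would occupy an interval [lo, hi] of sectors strictly between those of [a] and
   [c], and contain every vertex with sector in that interval.  Comparing with the branches of
   the vertices of sectors [lo - 1] and [hi + 1], the last edge of the tree path to any vertex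
   of the branch also has its direction in [lo, hi].  For the first polygon vertex of sector
   [lo] and the last one of sector [hi] this is impossible unless the vertex is [b] itself, and
   they cannot both be [b]. *)

From Pilot Require Import Defs.
From Stdlib Require Import Reals ZArith Lia Lra Classical.
From mathcomp Require Import all_boot zify.

Set Implicit Arguments.
Unset Strict Implicit.
Unset Printing Implicit Defensive.

Lemma Z_half_bounds (r : Z) : (2 * ((r + 1) / 2) <= r + 1 < 2 * ((r + 1) / 2) + 2)%Z.
Proof. by Z.div_mod_to_equations; lia. Qed.

(* Angles are measured in units of [pi/(2h)], where [k = 2h], up to a rotation by a whole
   number of units ([shift]).  A signed direction is an integer [t] in [0, 4h), standing for the
   angle [t]; these are the directions of [D] and their opposites.  Thanks to the offset
   [2pi/(3k)], every segment of [S_k] has polar angle strictly between two consecutive units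
   [c] and [c + 1]; we call [c] its cell.  The segment goes up in direction [t] iff [t] is less
   than a quarter turn away from its angle, i.e. iff [in_arc c t]. *)
Section Arcs.
Local Open Scope Z_scope.

Variable h : Z.

Definition in_arc (c t : Z) : Prop :=
  let d := c - t in (-h <= d <= h - 1) \/ 3 * h <= d \/ d <= - 3 * h - 1.

Definition in_arcb (c t : Z) : bool :=
  let d := c - t in ((-h <=? d) && (d <=? h - 1)) || (3 * h <=? d) || (d <=? - 3 * h - 1).

Lemma in_arcP c t : reflect (in_arc c t) (in_arcb c t).
Proof.
have E : in_arcb c t = true <-> in_arc c t.
  by rewrite /in_arcb /in_arc !Bool.orb_true_iff Bool.andb_true_iff !Z.leb_le; tauto.
by apply: (iffP idP) => /E.
Qed.

Definition shift (i p : Z) : Z := if i <=? p then p - i else p + 4 * h - i.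

Definition opp_dir (t : Z) : Z := if t <? 2 * h then t + 2 * h else t - 2 * h.

Definition chord_cell (p q : Z) : Z :=
  let q' := if p <? q then q else q + 4 * h in
  let c := h + (p + q' + 1) / 2 in
  if 4 * h <=? c then c - 4 * h else c.

Definition origin_cell (p : Z) : Z := if p <? 2 * h then p + 2 * h else p - 2 * h.

(* The cell of a segment between two points given by their polygon indices relative to [i],
   [None] standing for the origin; the value for two origins is junk. *)
Definition edge_cell (i : Z) (oy oz : option Z) : Z :=
  match oy, oz with
  | None, Some q => shift i q
  | Some p, None => origin_cell (shift i p)
  | Some p, Some q => chord_cell (shift i p) (shift i q)
  | None, None => 0
  end.

Lemma chord_cellE p q :
  exists m, 2 * m <= p + (if p <? q then q else q + 4 * h) + 1 < 2 * m + 2 /\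
    chord_cell p q = if 4 * h <=? h + m then h + m - 4 * h else h + m.
Proof.
exists ((p + (if p <? q then q else q + 4 * h) + 1) / 2).
by split; first exact: Z_half_bounds.
Qed.

Lemma shiftE i p : 0 <= i < 4 * h -> 0 <= p < 4 * h ->
  0 <= shift i p < 4 * h /\ (shift i p = p - i \/ shift i p = p + 4 * h - i).
Proof. by move=> ? ?; rewrite /shift; case: Z.leb_spec; lia. Qed.

Lemma shift_bounds i p : 0 <= i < 4 * h -> 0 <= p < 4 * h -> 0 <= shift i p < 4 * h.
Proof. by move=> Hi Hp; case: (shiftE Hi Hp). Qed.

Lemma shift_inj i p q : 0 <= i < 4 * h -> 0 <= p < 4 * h -> 0 <= q < 4 * h ->
  p <> q -> shift i p <> shift i q.
Proof. by move=> Hi Hp Hq ?; have := shiftE Hi Hp; have := shiftE Hi Hq; lia. Qed.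

Lemma chord_cell_bounds p q : 0 <= p < 4 * h -> 0 <= q < 4 * h -> p <> q ->
  0 <= chord_cell p q < 4 * h.
Proof.
move=> ? ? ?; have [m [+ ->]] := chord_cellE p q.
by case: Z.ltb_spec; case: Z.leb_spec; lia.
Qed.

Lemma origin_cell_bounds p : 0 <= p < 4 * h -> 0 <= origin_cell p < 4 * h.
Proof. by rewrite /origin_cell; case: Z.ltb_spec; lia. Qed.

Lemma opp_dir_bounds t : 0 <= t < 4 * h -> 0 <= opp_dir t < 4 * h.
Proof. by rewrite /opp_dir; case: Z.ltb_spec; lia. Qed.

Lemma in_arc_opp_dir c t : 0 <= t < 4 * h -> 0 <= c < 4 * h ->
  in_arc c (opp_dir t) <-> ~ in_arc c t.
Proof. by rewrite /in_arc /opp_dir; case: Z.ltb_spec; lia. Qed.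

Lemma in_arc_chord_cell_rev p q t : 0 <= p < 4 * h -> 0 <= q < 4 * h -> p <> q ->
  0 <= t < 4 * h -> in_arc (chord_cell q p) t <-> ~ in_arc (chord_cell p q) t.
Proof.
move=> ? ? ? ?; have [m [+ ->]] := chord_cellE p q; have [m' [+ ->]] := chord_cellE q p.
rewrite /in_arc; do 2 case: Z.ltb_spec; do 2 case: Z.leb_spec; lia.
Qed.

Lemma in_arc_origin_cell p t : 0 <= p < 4 * h -> 0 <= t < 4 * h ->
  in_arc p t <-> ~ in_arc (origin_cell p) t.
Proof. by rewrite /in_arc /origin_cell; case: Z.ltb_spec; lia. Qed.

Lemma in_arc_chord_cell_shift i p q j : 0 <= i < 4 * h -> 0 <= p < 4 * h -> 0 <= q < 4 * h ->
  p <> q -> 0 <= j < 2 * h ->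
  in_arc (chord_cell (shift i p) (shift i q)) (shift i j) <->
  (0 < 3 * (p + q) + 4 - 6 * j < 12 * h /\ q < p) \/
  ((3 * (p + q) + 4 - 6 * j < 0 \/ 12 * h < 3 * (p + q) + 4 - 6 * j) /\ p < q).
Proof.
move=> Hi Hp Hq Hpq Hj.
have := shiftE Hi Hp; have := shiftE Hi Hq; have := shiftE (p := j) Hi ltac:(lia).
have [m [+ ->]] := chord_cellE (shift i p) (shift i q).
have := Z_half_bounds (p + q).
rewrite /in_arc; case: Z.ltb_spec; case: Z.leb_spec; lia.
Qed.

Lemma in_arc_shift i q j : 0 <= i < 4 * h -> 0 <= q < 4 * h -> 0 <= j < 2 * h ->
  (in_arc (shift i q) (shift i j) ->
     0 < 6 * (q - j) + 4 + 6 * h < 12 * h \/ 24 * h < 6 * (q - j) + 4 + 6 * h < 36 * h) /\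
  (~ in_arc (shift i q) (shift i j) ->
     -12 * h < 6 * (q - j) + 4 + 6 * h < 0 \/ 12 * h < 6 * (q - j) + 4 + 6 * h < 24 * h).
Proof.
move=> Hi Hq Hj; have := shiftE Hi Hq; have := shiftE (p := j) Hi ltac:(lia).
rewrite /in_arc; lia.
Qed.

Lemma in_arc_origin_cell_shift i p j : 0 <= i < 4 * h -> 0 <= p < 4 * h -> 0 <= j < 2 * h ->
  (in_arc (origin_cell (shift i p)) (shift i j) ->
     -12 * h < 6 * (p - j) + 4 + 6 * h < 0 \/ 12 * h < 6 * (p - j) + 4 + 6 * h < 24 * h) /\
  (~ in_arc (origin_cell (shift i p)) (shift i j) ->
     0 < 6 * (p - j) + 4 + 6 * h < 12 * h \/ 24 * h < 6 * (p - j) + 4 + 6 * h < 36 * h).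
Proof.
move=> Hi Hp Hj; have := shiftE Hi Hp; have := shiftE (p := j) Hi ltac:(lia).
rewrite /in_arc /origin_cell; case: Z.ltb_spec; lia.
Qed.

Lemma in_arc_sides a1 a2 c t :
  h + 1 <= a1 <= 3 * h -> h + 1 <= a2 <= 3 * h -> h + 1 <= c <= 3 * h -> 0 <= t < 4 * h ->
  in_arc a1 t -> in_arc a2 t -> ~ in_arc c t ->
  (c < a1 /\ c < a2) \/ (a1 < c /\ a2 < c).
Proof. rewrite /in_arc; lia. Qed.

Lemma in_arc_between lo hi s e t t' :
  h + 2 <= lo -> lo <= s <= hi -> hi <= 3 * h - 1 ->
  0 <= e < 4 * h -> 0 <= t < 4 * h -> 0 <= t' < 4 * h ->
  ~ in_arc (lo - 1) t -> in_arc s t -> in_arc e t ->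
  ~ in_arc (hi + 1) t' -> in_arc s t' -> in_arc e t' -> lo <= e <= hi.
Proof. rewrite /in_arc; lia. Qed.

Lemma chord_cell_to_band_min lo hi p : h + 2 <= lo <= hi -> hi <= 3 * h - 1 ->
  1 <= p < 4 * h -> p <> 2 * (lo - h) - 1 -> lo <= h + (p + 1) / 2 <= hi ->
  ~ lo <= chord_cell p (2 * (lo - h) - 1) <= hi.
Proof.
move=> ? ? ? ? +; have [m [+ ->]] := chord_cellE p (2 * (lo - h) - 1).
have := Z_half_bounds p.
case: Z.ltb_spec; case: Z.leb_spec; lia.
Qed.

Lemma chord_cell_to_band_max lo hi p : h + 2 <= lo <= hi -> hi <= 3 * h - 1 ->
  1 <= p < 4 * h -> p <> 2 * (hi - h) -> lo <= h + (p + 1) / 2 <= hi ->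
  ~ lo <= chord_cell p (2 * (hi - h)) <= hi.
Proof.
move=> ? ? ? ? +; have [m [+ ->]] := chord_cellE p (2 * (hi - h)).
have := Z_half_bounds p.
case: Z.ltb_spec; case: Z.leb_spec; lia.
Qed.

Lemma origin_cell_notin_band lo hi p : h + 2 <= lo <= hi -> hi <= 2 * h ->
  1 <= p < 4 * h -> lo <= h + (p + 1) / 2 <= hi -> ~ lo <= origin_cell p <= hi.
Proof.
move=> ? ? ?; have := Z_half_bounds p.
rewrite /origin_cell; case: Z.ltb_spec; lia.
Qed.

End Arcs.

Section SinSigns.
Local Open Scope R_scope.

Variable h : Z.
Hypothesis h_pos : (1 <= h)%Z.

Let u := PI / IZR (12 * h).

Lemma step_pos : 0 < u.
Proof. by apply: Rdiv_lt_0_compat; [exact: PI_RGT_0 | apply: IZR_lt; lia]. Qed.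

Lemma shift_step_PI n m : IZR n * u + IZR m * PI = IZR (n + 12 * h * m) * u.
Proof. rewrite /u plus_IZR !mult_IZR; field; apply: not_0_IZR; lia. Qed.

Lemma sin_step_gt0_base n : (0 < n < 12 * h)%Z -> 0 < sin (IZR n * u).
Proof.
move=> Hn; apply: sin_gt_0.
  by apply: Rmult_lt_0_compat; [apply: IZR_lt; lia | exact: step_pos].
have -> : PI = IZR (12 * h) * u by rewrite /u; field; apply: not_0_IZR; lia.
by apply: Rmult_lt_compat_r; [exact: step_pos | apply: IZR_lt; lia].
Qed.

Lemma sin_step_gt0 n : (0 < n < 12 * h \/ 24 * h < n < 36 * h)%Z -> 0 < sin (IZR n * u).
Proof.
case=> Hn; first exact: sin_step_gt0_base.
have := shift_step_PI (n - 24 * h) 2; rewrite (_ : (n - 24 * h + 12 * h * 2 = n)%Z); last lia.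
move <-; rewrite (_ : IZR 2 * PI = 2 * INR 1 * PI); last by rewrite /= ; ring.
by rewrite sin_period; apply: sin_step_gt0_base; lia.
Qed.

Lemma sin_step_lt0 n : (-12 * h < n < 0 \/ 12 * h < n < 24 * h)%Z -> sin (IZR n * u) < 0.
Proof.
case=> Hn.
  rewrite (_ : IZR n * u = - (IZR (- n) * u)); last by rewrite opp_IZR; ring.
  by rewrite sin_neg; have := sin_step_gt0_base (n := - n) ltac:(lia); lra.
have := shift_step_PI (n - 12 * h) 1; rewrite (_ : (n - 12 * h + 12 * h * 1 = n)%Z); last lia.
move <-; rewrite Rmult_1_l neg_sin.
by have := sin_step_gt0_base (n := n - 12 * h) ltac:(lia); lra.
Qed.

End SinSigns.

Definition proj (k j : nat) (v : vtx k) : R := dot (Defs.pos v) (dir k j).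

Definition vindex (k : nat) (v : vtx k) : option Z :=
  if (v < 2 * k)%N then Some (Z.of_nat v) else None.

Lemma origin_unique (k : nat) (y z : vtx k) :
  ~~ (y < 2 * k)%N -> ~~ (z < 2 * k)%N -> y = z.
Proof.
by move=> Hy Hz; apply: val_inj; move: (ltn_ord y) (ltn_ord z) Hy Hz; rewrite -!leqNgt /=; lia.
Qed.

Section Projections.
Local Open Scope R_scope.

Variables k h : nat.
Hypothesis k_eq : k = (2 * h)%N.
Hypothesis h_pos : (0 < h)%N.

Let H := Z.of_nat h.
(* [v_p] has polar angle [(6p + 4) u] and [d_(j+1)] has polar angle [6 j u]. *)
Let u := PI / IZR (12 * H).

Let H_pos : (1 <= H)%Z.
Proof. by rewrite /H; lia. Qed.

Lemma proj_polygon j (v : vtx k) : (v < 2 * k)%N ->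
  proj j v = cos (IZR (6 * Z.of_nat v + 4 - 6 * Z.of_nat j) * u).
Proof.
move=> Hv; rewrite /proj /Defs.pos /dir /dot Hv; cbn [fst snd]; rewrite -cos_minus; congr cos.
have Hk : INR k = 2 * INR h by rewrite k_eq mult_INR.
have : 0 < INR h by apply: lt_0_INR; apply/ltP.
rewrite /u /H minus_IZR plus_IZR !mult_IZR -!INR_IZR_INZ Hk => ?.
field; lra.
Qed.

Lemma proj_origin j (v : vtx k) : ~~ (v < 2 * k)%N -> proj j v = 0.
Proof. by move=> Hv; rewrite /proj /Defs.pos /dot (negbTE Hv) /=; ring. Qed.

Lemma cos_as_sin n : cos (IZR n * u) = sin (IZR (n + 6 * H) * u).
Proof.
rewrite cos_sin; congr sin; rewrite /u plus_IZR !mult_IZR.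
by field; apply: not_0_IZR; have := H_pos; lia.
Qed.

Section Direction.
Variables (i : Z) (j : nat).
Hypothesis i_bounds : (0 <= i < 4 * H)%Z.
Hypothesis j_lt : (j < 2 * h)%N.

Let J := Z.of_nat j.
Let t := shift H i J.

Lemma J_bounds : (0 <= J < 2 * H)%Z. Proof. rewrite /J /H; lia. Qed.

(* The difference of the projections is [-2 sin (3 (q - p) u) sin ((3 (p + q) + 4 - 6 j) u)]. *)
Lemma proj_polygon_cmp (y z : vtx k) : (y < 2 * k)%N -> (z < 2 * k)%N -> y <> z ->
  (in_arc H (chord_cell H (shift H i (Z.of_nat y)) (shift H i (Z.of_nat z))) t ->
     proj j y < proj j z) /\
  (~ in_arc H (chord_cell H (shift H i (Z.of_nat y)) (shift H i (Z.of_nat z))) t ->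
     proj j z < proj j y).
Proof.
move=> Hy Hz Hyz; rewrite (proj_polygon j Hy) (proj_polygon j Hz).
have Hne : Z.of_nat y <> Z.of_nat z by move=> E; apply: Hyz; apply: val_inj => /=; lia.
have Hy' : (0 <= Z.of_nat y < 4 * H)%Z by rewrite /H; lia.
have Hz' : (0 <= Z.of_nat z < 4 * H)%Z by rewrite /H; lia.
have HS := in_arc_chord_cell_shift i_bounds Hy' Hz' Hne J_bounds.
rewrite -/J in HS *; set p := Z.of_nat y in Hy' Hne HS *; set q := Z.of_nat z in Hz' Hne HS *.
have Hf : cos (IZR (6 * q + 4 - 6 * J) * u) - cos (IZR (6 * p + 4 - 6 * J) * u) =
  -2 * sin (IZR (3 * (q - p)) * u) * sin (IZR (3 * (p + q) + 4 - 6 * J) * u).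
  by rewrite form2; congr (_ * sin _ * sin _); do 2 rewrite ?minus_IZR ?plus_IZR ?mult_IZR; field.
have S1 := sin_step_gt0 H_pos (n := 3 * (q - p)); have S2 := sin_step_lt0 H_pos (n := 3 * (q - p)).
have S3 := sin_step_gt0 H_pos (n := 3 * (p + q) + 4 - 6 * J).
have S4 := sin_step_lt0 H_pos (n := 3 * (p + q) + 4 - 6 * J).
rewrite /u in Hf *; split=> Hc.
  move/HS: Hc => [[? ?] | [? ?]].
    by have := S2 ltac:(lia); have := S3 ltac:(lia); nra.
  by have := S1 ltac:(lia); have := S4 ltac:(lia); nra.
have {}Hc : ~ ((0 < 3 * (p + q) + 4 - 6 * J < 12 * H /\ q < p) \/
   ((3 * (p + q) + 4 - 6 * J < 0 \/ 12 * H < 3 * (p + q) + 4 - 6 * J) /\ p < q))%Z.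
  by move=> C; apply: Hc; apply/HS.
case: (Z.lt_total p q) => [L | [L | L]]; first 2 [lia].
  by have := S1 ltac:(lia); have := S3 ltac:(lia); nra.
by have := S2 ltac:(lia); have := S4 ltac:(lia); nra.
Qed.

Lemma proj_polygon_sin (y : vtx k) : (y < 2 * k)%N ->
  proj j y = sin (IZR (6 * (Z.of_nat y - J) + 4 + 6 * H) * u).
Proof.
by move=> Hy; rewrite (proj_polygon j Hy) cos_as_sin; congr (sin (IZR _ * u)); rewrite /J; lia.
Qed.

Lemma proj_to_origin_cmp (y z : vtx k) : (y < 2 * k)%N -> ~~ (z < 2 * k)%N ->
  (in_arc H (origin_cell H (shift H i (Z.of_nat y))) t -> proj j y < proj j z) /\
  (~ in_arc H (origin_cell H (shift H i (Z.of_nat y))) t -> proj j z < proj j y).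
Proof.
move=> Hy Hz; rewrite (proj_origin j Hz) (proj_polygon_sin Hy) /u.
have [S1 S2] := in_arc_origin_cell_shift i_bounds (p := Z.of_nat y)
  ltac:(rewrite /H; lia) J_bounds.
split.
  by move/S1/(sin_step_lt0 H_pos).
by move/S2/(sin_step_gt0 H_pos).
Qed.

Lemma proj_from_origin_cmp (y z : vtx k) : ~~ (y < 2 * k)%N -> (z < 2 * k)%N ->
  (in_arc H (shift H i (Z.of_nat z)) t -> proj j y < proj j z) /\
  (~ in_arc H (shift H i (Z.of_nat z)) t -> proj j z < proj j y).
Proof.
move=> Hy Hz; rewrite (proj_origin j Hy) (proj_polygon_sin Hz) /u.
have [S1 S2] := in_arc_shift i_bounds (q := Z.of_nat z) ltac:(rewrite /H; lia) J_bounds.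
split.
  by move/S1/(sin_step_gt0 H_pos).
by move/S2/(sin_step_lt0 H_pos).
Qed.

Lemma proj_cmp (y z : vtx k) : y <> z ->
  (in_arc H (edge_cell H i (vindex y) (vindex z)) t -> proj j y < proj j z) /\
  (~ in_arc H (edge_cell H i (vindex y) (vindex z)) t -> proj j z < proj j y).
Proof.
rewrite /vindex; case Hy: (y < 2 * k)%N; case Hz: (z < 2 * k)%N => Hyz /=.
- exact: proj_polygon_cmp.
- exact: proj_to_origin_cmp (negbT Hz).
- exact: proj_from_origin_cmp (negbT Hy) Hz.
- by case: Hyz; apply: origin_unique; rewrite ?Hy ?Hz.
Qed.
End Direction.
End Projections.

Section MonotonePaths.
Local Open Scope R_scope.

Lemma path_strict_incr (T : Type) (e r : rel T) (F : T -> R) u p :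
  (forall y z, e y z -> F y < F z -> r y z) ->
  path e u p -> strict_incr (map F (u :: p)) -> path r u p.
Proof.
move=> Her; elim: p u => [//|z p IH] u /= /andP [Euz Hp].
by case: p IH Hp => [|w p] IH Hp [Fuz Hs] /=; rewrite Her // ?andbT; last exact: IH.
Qed.

Lemma path_strict_decr (T : Type) (e r : rel T) (F : T -> R) u p :
  (forall y z, e y z -> F z < F y -> r y z) ->
  path e u p -> strict_decr (map F (u :: p)) -> path r u p.
Proof.
move=> Her; elim: p u => [//|z p IH] u /= /andP [Euz Hp].
by case: p IH Hp => [|w p] IH Hp [Fuz Hs] /=; rewrite Her // ?andbT; last exact: IH.
Qed.

Lemma path_lt_last (T : Type) (r : rel T) (F : T -> R) x p :
  (forall y z, r y z -> F y < F z) -> path r x p -> p <> [::] -> F x < F (last x p).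
Proof.
move=> HF; elim: p x => [//|z p IH] x /= /andP [Hxz Hp] _.
case: p IH Hp => [|w p] IH Hp; first exact: HF.
by have := IH z Hp ltac:(done); have := HF _ _ Hxz; rewrite /=; lra.
Qed.

End MonotonePaths.

Section Ascent.
Local Open Scope R_scope.

Variables (k h : nat) (i : Z).
Hypothesis k_eq : k = (2 * h)%N.
Hypothesis h_pos : (0 < h)%N.

Let H := Z.of_nat h.
Hypothesis i_bounds : (0 <= i < 4 * H)%Z.

Definition cell (y z : vtx k) : Z := edge_cell H i (vindex y) (vindex z).

Definition ascends (t : Z) (y z : vtx k) : bool := (y != z) && in_arcb H (cell y z) t.

Lemma ascends_neq t y z : ascends t y z -> y <> z.
Proof. by case/andP => /eqP. Qed.

Lemma ascends_in_arc t y z : ascends t y z -> in_arc H (cell y z) t.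
Proof. by case/andP => _ /in_arcP. Qed.

Lemma vindex_cases (y : vtx k) :
  (vindex y = None /\ ~~ (y < 2 * k)%N) \/
  (vindex y = Some (Z.of_nat y) /\ (y < 2 * k)%N /\ (0 <= Z.of_nat y < 4 * H)%Z).
Proof. by rewrite /vindex; case: ifP => Hy; [right; do 2 split => //; rewrite /H; lia | left]. Qed.

Lemma cell_bounds y z : y <> z -> (0 <= cell y z < 4 * H)%Z.
Proof.
move=> Hyz; rewrite /cell.
case: (vindex_cases y) => [[-> Hy] | [-> [Hy Hy']]];
  case: (vindex_cases z) => [[-> Hz] | [-> [Hz Hz']]]; cbn [edge_cell].
- by case: Hyz; apply: origin_unique.
- by apply: shift_bounds.
- by apply: origin_cell_bounds; apply: shift_bounds.
- have Hne : Z.of_nat y <> Z.of_nat z by move=> E; apply: Hyz; apply: val_inj => /=; lia.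
  by apply: chord_cell_bounds; [exact: shift_bounds | exact: shift_bounds | exact: shift_inj].
Qed.

Lemma in_arc_cell_rev y z t : y <> z -> (0 <= t < 4 * H)%Z ->
  in_arc H (cell z y) t <-> ~ in_arc H (cell y z) t.
Proof.
move=> Hyz Ht; rewrite /cell.
case: (vindex_cases y) => [[-> Hy] | [-> [Hy Hy']]];
  case: (vindex_cases z) => [[-> Hz] | [-> [Hz Hz']]]; cbn [edge_cell].
- by case: Hyz; apply: origin_unique.
- by have := in_arc_origin_cell (shift_bounds i_bounds Hz') Ht; tauto.
- by have := in_arc_origin_cell (shift_bounds i_bounds Hy') Ht; tauto.
- have Hne : Z.of_nat y <> Z.of_nat z by move=> E; apply: Hyz; apply: val_inj => /=; lia.
  by apply: in_arc_chord_cell_rev;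
    [exact: shift_bounds | exact: shift_bounds | exact: shift_inj | ].
Qed.

Lemma ascends_rev t y z : (0 <= t < 4 * H)%Z -> ascends t z y = ascends (opp_dir H t) y z.
Proof.
move=> Ht; rewrite /ascends eq_sym; case: (eqVneq y z) => [// | Hyz] /=.
have Hyz' : y <> z by apply/eqP.
have := in_arc_cell_rev Hyz' Ht; have := in_arc_opp_dir Ht (cell_bounds Hyz').
by do 2 case: in_arcP; tauto.
Qed.

Lemma ascends_opp_dir t y z : (0 <= t < 4 * H)%Z -> y <> z ->
  ascends (opp_dir H t) y z = ~~ ascends t y z.
Proof.
move=> Ht Hyz; rewrite /ascends (introF eqP Hyz) /=.
by have := in_arc_opp_dir Ht (cell_bounds Hyz); do 2 case: in_arcP; tauto.
Qed.

Lemma ascends_proj j y z : (j < 2 * h)%N -> y <> z ->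
  (ascends (shift H i (Z.of_nat j)) y z -> proj j y < proj j z) /\
  (~~ ascends (shift H i (Z.of_nat j)) y z -> proj j z < proj j y).
Proof.
move=> Hj Hyz; have [C1 C2] := proj_cmp k_eq h_pos i_bounds Hj Hyz.
rewrite /ascends (introF eqP Hyz) /=.
by split; [move/in_arcP; exact: C1 | move/in_arcP; exact: C2].
Qed.

Lemma signed_dir_shift t : (0 <= t < 4 * H)%Z -> exists j, (j < 2 * h)%N /\
  (t = shift H i (Z.of_nat j) \/ t = opp_dir H (shift H i (Z.of_nat j))).
Proof.
move=> Ht.
have [s [Hs Hsi]] : exists s, (0 <= s < 4 * H /\ (s = t + i \/ s = t + i - 4 * H))%Z.
  by case: (Z.ltb_spec (t + i) (4 * H)) => ?; [exists (t + i)%Z | exists (t + i - 4 * H)%Z]; lia.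
case: (Z.ltb_spec s (2 * H)) => Hlt.
  exists (Z.to_nat s); split; first by rewrite /H in Hlt; lia.
  by left; rewrite Z2Nat.id /shift; [case: Z.leb_spec; lia | lia].
exists (Z.to_nat (s - 2 * H)); split; first by rewrite /H in Hs; lia.
by right; rewrite Z2Nat.id /shift /opp_dir; [case: Z.leb_spec => ?; case: Z.ltb_spec; lia | lia].
Qed.

Lemma ascends_potential t : (0 <= t < 4 * H)%Z ->
  exists F : vtx k -> R, forall y z, y <> z ->
    (ascends t y z -> F y < F z) /\ (~~ ascends t y z -> F z < F y).
Proof.
move=> Ht; have [j [Hj [-> | ->]]] := signed_dir_shift Ht.
  by exists (proj j) => y z; exact: ascends_proj.
exists (fun v => - proj j v) => y z Hyz.
have Hs : (0 <= shift H i (Z.of_nat j) < 4 * H)%Z by apply: shift_bounds => //; rewrite /H; lia.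
have [P1 P2] := ascends_proj Hj Hyz; rewrite ascends_opp_dir // negbK.
by split => [/P2 | /P1]; lra.
Qed.

Lemma ascends_last t x p : (0 <= t < 4 * H)%Z -> path (ascends t) x p -> p <> [::] ->
  x <> last x p -> ascends t x (last x p).
Proof.
move=> Ht Hp Hne Hx; have [F HF] := ascends_potential Ht.
have Hlt := path_lt_last (fun y z A => proj1 (HF y z (ascends_neq A)) A) Hp Hne.
by apply/negPn/negP => /(proj2 (HF _ _ Hx)); lra.
Qed.

Lemma monotone_path_ascends j (E : rel (vtx k)) u p : (j < k)%N -> irreflexive E ->
  path E u p -> d_monotone (dir k j) (map (@Defs.pos k) (u :: p)) ->
  exists t, (0 <= t < 4 * H)%Z /\ path (ascends t) u p.
Proof.
move=> Hj Eirr Hp [_ Hm]; have Hj' : (j < 2 * h)%N by rewrite -k_eq.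
have Hs : (0 <= shift H i (Z.of_nat j) < 4 * H)%Z by apply: shift_bounds => //; rewrite /H; lia.
have Hne y z : E y z -> y <> z by move=> Eyz Eq; rewrite Eq Eirr in Eyz.
rewrite -map_comp in Hm; case: Hm => Hm.
  exists (shift H i (Z.of_nat j)); split => //; apply: path_strict_incr Hp Hm => y z Eyz Hlt.
  apply/negPn/negP => /(proj2 (ascends_proj Hj' (Hne _ _ Eyz))).
  by move: Hlt; rewrite /proj /=; lra.
exists (opp_dir H (shift H i (Z.of_nat j))); split; first exact: opp_dir_bounds.
apply: path_strict_decr Hp Hm => y z Eyz Hlt; rewrite ascends_opp_dir //; last exact: Hne.
apply/negP => /(proj1 (ascends_proj Hj' (Hne _ _ Eyz))).
by move: Hlt; rewrite /proj /=; lra.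
Qed.

End Ascent.

Lemma path_rev_cat (T : Type) (r : rel T) x a ra p :
  path r (last x (a :: ra)) (rev (belast x (a :: ra)) ++ p) =
  path (fun y z => r z y) x (a :: ra) && path r x p.
Proof. by rewrite cat_path rev_path /= rev_cons last_rcons. Qed.

Section TreePaths.
Variables (T : finType) (E : rel T).
Hypothesis Esym : symmetric E.
Hypothesis Eacyclic : ~ (exists c : seq T, [/\ uniq c, (2 < size c)%N & cycle E c]).

Lemma path_rev_sym x p : path E (last x p) (rev (belast x p)) = path E x p.
Proof. by rewrite rev_path; apply: eq_path => a b; rewrite Esym. Qed.

(* Two simple paths from [x] to [z] leaving [x] through different neighbours close up to a
   cycle through [x] and their first common vertex. *)
Lemma simple_path_head_unique x z b1 r1 b2 r2 :
  simple_path E x z (b1 :: r1) -> simple_path E x z (b2 :: r2) -> b1 = b2.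
Proof.
move=> [P1 [L1 U1]] [P2 [L2 U2]]; case: (eqVneq b1 b2) => // Hb; case: Eacyclic.
set p1 := b1 :: r1 in P1 L1 U1 *; set p2 := b2 :: r2 in P2 L2 U2 *.
have Hhas : has (mem p1) p2.
  by apply/hasP; exists z; [rewrite -L2 /p2 /= mem_last | rewrite -L1 /p1 /= mem_last].
have E1 : b1 :: r1 = p1 by []; have E2 : b2 :: r2 = p2 by [].
move: P2 L2 U2 E2; clearbody p2; case: (split_find_nth x Hhas) => y t s2 Hy Ht P2 _ U2 E2.
move: P1 U1 E1 Ht; clearbody p1; case/splitPr: Hy => q1 s1 P1 U1 E1 Ht.
exists (x :: q1 ++ y :: rev t); split.
- have U1' : uniq (x :: q1 ++ [:: y]).
    by move: U1; rewrite -cat1s -(cat1s y s1) !catA cat_uniq => /and3P [].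
  have U2' : uniq (x :: rcons t y) by move: U2; rewrite -cat1s catA cat_uniq => /and3P [].
  rewrite -cat1s -(cat1s y (rev t)) catA catA cat_uniq -catA cat1s U1' rev_uniq /=.
  apply/andP; split; last by move: U2'; rewrite /= rcons_uniq => /and3P [].
  apply/hasP => [[w]]; rewrite mem_rev inE mem_cat inE => Hw.
  case/orP => [/eqP Ew | /orP [Hq | /eqP Ew]].
  + by move: U2'; rewrite /= -Ew mem_rcons inE Hw orbT.
  + move/hasP: Ht; apply; exists w => //.
    by change (w \in q1 ++ y :: s1); rewrite mem_cat Hq.
  + move/hasP: Ht; apply; exists w => //.
    by change (w \in q1 ++ y :: s1); rewrite Ew mem_cat inE eqxx orbT.
- rewrite /= size_cat /= size_rev.
  case: q1 P1 U1 E1 Ht => [|a q1] P1 U1 E1 Ht; last by rewrite /=; lia.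
  case: t P2 U2 Ht E2 => [|c t] P2 U2 Ht E2 /=; last by rewrite /=; lia.
  by move: Hb; case: E1 => -> _; case: E2 => -> _; rewrite eqxx.
- rewrite /cycle rcons_cat rcons_cons cat_path.
  move: P1; rewrite cat_path => /andP [-> /= /andP [-> _]] /=.
  move: P2; rewrite cat_path => /andP [P2 _].
  by rewrite -path_rev_sym last_rcons belast_rcons rev_cons in P2.
Qed.

Lemma connect_simple_path x y : connect E x y -> exists p, simple_path E x y p.
Proof. by case/connectP => p P ->; case: (shortenP P) => p' P' U _; exists p'. Qed.

Lemma simple_path_prefix x w p y : simple_path E x w p -> y \in p ->
  exists p', simple_path E x y p' /\ head x p' = head x p.
Proof.
move=> [P [L U]] Hy; move: P L U; case/splitPr: Hy => q s P L U.
exists (rcons q y); split; last by case: q {P L U}.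
split; last split; first by move: P; rewrite -cats1 !cat_path /= andbT => /andP [-> /andP [-> _]].
  by rewrite last_rcons.
by move: U; rewrite -cats1 -cat1s -(cat1s y s) !catA cat_uniq => /and3P [].
Qed.

Lemma simple_path_branches_disjoint x w w' a ra b rb z :
  simple_path E x w (a :: ra) -> simple_path E x w' (b :: rb) -> a != b ->
  z \in a :: ra -> z \in b :: rb -> False.
Proof.
move=> S1 S2 Hab Z1 Z2.
have [[|a1 r1] [T1 /= H1]] := simple_path_prefix S1 Z1.
  by case: T1 => [_ [/= L _]]; case: S1 => [_ [_ /= /andP []]]; rewrite L Z1.
have [[|a2 r2] [T2 /= H2]] := simple_path_prefix S2 Z2.
  by case: T2 => [_ [/= L _]]; case: S2 => [_ [_ /= /andP []]]; rewrite L Z2.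
by move: Hab; rewrite -H1 -H2 (simple_path_head_unique T1 T2) eqxx.
Qed.

Lemma simple_path_join x w w' a ra b rb :
  simple_path E x w (a :: ra) -> simple_path E x w' (b :: rb) -> a != b ->
  simple_path E w w' (rev (belast x (a :: ra)) ++ b :: rb).
Proof.
move=> S1 S2 Hab; have D := simple_path_branches_disjoint S1 S2 Hab.
case: (S1) (S2) => [P1 [L1 U1]] [P2 [L2 U2]]; split; last split.
- rewrite -L1 path_rev_cat P2 andbT.
  by rewrite (@eq_path _ _ E) // => u v; rewrite Esym.
- by rewrite last_cat.
- have -> : w :: rev (belast x (a :: ra)) ++ b :: rb = rev (x :: a :: ra) ++ b :: rb.
    by rewrite [x :: a :: ra]lastI L1 rev_rcons.
  rewrite cat_uniq rev_uniq U1; case/andP: U2 => Hx Ub; apply/and3P; split => //.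
  apply/hasP => [[z Z2]]; rewrite mem_rev inE => /orP [/eqP Ez | Z1].
    by move: Hx; rewrite -Ez Z2.
  exact: D Z1 Z2.
Qed.

End TreePaths.

Lemma Z_nonneg_argmin (T : Type) (P : T -> Prop) (f : T -> Z) :
  (exists w, P w) -> (forall w, P w -> (0 <= f w)%Z) ->
  exists w, P w /\ forall w', P w' -> (f w <= f w')%Z.
Proof.
move=> [w0 P0] Hpos.
suff : forall n w, P w -> (Z.to_nat (f w) <= n)%N ->
    exists w, P w /\ forall w', P w' -> (f w <= f w')%Z by apply; [exact: P0 | ].
elim=> [|n IH] w Pw Hn.
  by exists w; split => // w' Pw'; have := Hpos _ Pw; have := Hpos _ Pw'; lia.
case: (classic (exists w', P w' /\ (f w' < f w)%Z)) => [[w' [Pw' Hlt]] | NE].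
  by apply: (IH w' Pw'); have := Hpos _ Pw'; lia.
by exists w; split => // w' Pw'; apply: NNPP => Hlt; apply: NE; exists w'; split => //; lia.
Qed.

Section Branches.
Variables (k h : nat) (E : rel (vtx k)) (x : vtx k).
Hypothesis k_eq : k = (2 * h)%N.
Hypothesis h_pos : (0 < h)%N.
Hypothesis x_polygon : (x < 2 * k)%N.
Hypothesis Esym : symmetric E.
Hypothesis Eirr : irreflexive E.
Hypothesis Eacyclic : ~ (exists c : seq (vtx k), [/\ uniq c, (2 < size c)%N & cycle E c]).
Hypothesis Econn : forall u v, connect E u v.

Let H := Z.of_nat h.
Let i := Z.of_nat x.

Hypothesis E_monotone : forall u v p, simple_path E u v p ->
  exists t, (0 <= t < 4 * H)%Z /\ path (ascends h i t) u p.

Let i_bounds : (0 <= i < 4 * H)%Z.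
Proof. by rewrite /i /H; lia. Qed.

Definition sector (w : vtx k) : Z := cell h i x w.

Definition rel_idx (w : vtx k) : Z := shift H i (Z.of_nat w).

Definition in_branch (b w : vtx k) : Prop := exists r, simple_path E x w (b :: r).

Lemma rel_idx_bounds (w : vtx k) : (w < 2 * k)%N -> (0 <= rel_idx w < 4 * H)%Z.
Proof. by move=> Hw; apply: shift_bounds => //; rewrite /H; lia. Qed.

Lemma rel_idx_x : rel_idx x = 0%Z.
Proof. by rewrite /rel_idx /shift -/i; case: Z.leb_spec; lia. Qed.

Lemma rel_idx_inj (w w' : vtx k) : (w < 2 * k)%N -> (w' < 2 * k)%N ->
  rel_idx w = rel_idx w' -> w = w'.
Proof.
move=> Hw Hw' E'; apply: val_inj => /=; apply: Nat2Z.inj; apply: NNPP => Hne.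
by apply: (shift_inj i_bounds _ _ Hne E'); rewrite /H; lia.
Qed.

Lemma cell_polygon (y z : vtx k) : (y < 2 * k)%N -> (z < 2 * k)%N ->
  cell h i y z = chord_cell H (rel_idx y) (rel_idx z).
Proof. by move=> Hy Hz; rewrite /cell /vindex Hy Hz. Qed.

Lemma cell_to_origin (y z : vtx k) : (y < 2 * k)%N -> ~~ (z < 2 * k)%N ->
  cell h i y z = origin_cell H (rel_idx y).
Proof. by move=> Hy /negbTE Hz; rewrite /cell /vindex Hy Hz. Qed.

Lemma cell_from_origin (y z : vtx k) : ~~ (y < 2 * k)%N -> (z < 2 * k)%N ->
  cell h i y z = rel_idx z.
Proof. by move=> /negbTE Hy Hz; rewrite /cell /vindex Hy Hz. Qed.

Lemma sector_polygon (w : vtx k) : (w < 2 * k)%N -> w <> x ->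
  sector w = (H + (rel_idx w + 1) / 2)%Z /\ (1 <= rel_idx w < 4 * H)%Z.
Proof.
move=> Hw Hwx; have R := rel_idx_bounds Hw.
have R0 : rel_idx w <> 0%Z by rewrite -rel_idx_x => /(rel_idx_inj Hw x_polygon).
rewrite /sector cell_polygon // rel_idx_x; split; last lia.
have [m [+ ->]] := chord_cellE H 0 (rel_idx w).
have := Z_half_bounds (rel_idx w).
by case: Z.ltb_spec; case: Z.leb_spec; lia.
Qed.

Lemma sector_origin (w : vtx k) : ~~ (w < 2 * k)%N -> sector w = (2 * H)%Z.
Proof.
by move=> Hw; rewrite /sector cell_to_origin // rel_idx_x /origin_cell; case: Z.ltb_spec; lia.
Qed.

Lemma sector_bounds (w : vtx k) : w <> x -> (H + 1 <= sector w <= 3 * H)%Z.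
Proof.
move=> Hwx; case Hw: (w < 2 * k)%N; last by rewrite sector_origin ?Hw //; lia.
have [-> R] := sector_polygon Hw Hwx.
by have := Z_half_bounds (rel_idx w); lia.
Qed.

Lemma vertex_of_rel_idx r : (1 <= r < 4 * H)%Z ->
  exists w : vtx k, [/\ (w < 2 * k)%N, w <> x & rel_idx w = r].
Proof.
move=> Hr.
have [p [Hp Hpr]] : exists p, (0 <= p < 4 * H /\ shift H i p = r)%Z.
  case: (Z.ltb_spec (r + i) (4 * H)) => ?; [exists (r + i)%Z | exists (r + i - 4 * H)%Z];
    by rewrite /shift; case: Z.leb_spec; lia.
have Hpn : (Z.to_nat p < (2 * k).+1)%N by rewrite /H in Hp; lia.
have Hw : rel_idx (Ordinal Hpn) = r by rewrite /rel_idx /= Z2Nat.id //; lia.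
exists (Ordinal Hpn); split => //=; first by rewrite /H in Hp; lia.
by move=> Ex; move: Hw; rewrite Ex rel_idx_x; lia.
Qed.

Lemma sector_vertex_odd s : (H + 1 <= s <= 3 * H)%Z ->
  exists w : vtx k, [/\ (w < 2 * k)%N, w <> x, rel_idx w = (2 * (s - H) - 1)%Z & sector w = s].
Proof.
move=> Hs; have [w [Hw Hwx Hr]] := vertex_of_rel_idx (r := (2 * (s - H) - 1)%Z) ltac:(lia).
exists w; split => //; have [-> _] := sector_polygon Hw Hwx; rewrite Hr.
by have := Z_half_bounds (2 * (s - H) - 1); lia.
Qed.

Lemma sector_vertex_even s : (H + 1 <= s < 3 * H)%Z ->
  exists w : vtx k, [/\ (w < 2 * k)%N, w <> x, rel_idx w = (2 * (s - H))%Z & sector w = s].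
Proof.
move=> Hs; have [w [Hw Hwx Hr]] := vertex_of_rel_idx (r := (2 * (s - H))%Z) ltac:(lia).
exists w; split => //; have [-> _] := sector_polygon Hw Hwx; rewrite Hr.
by have := Z_half_bounds (2 * (s - H)); lia.
Qed.

Lemma neighbour_simple_path a : E x a -> simple_path E x a [:: a].
Proof.
move=> Ha; split; [by rewrite /= Ha | split => //=].
by rewrite inE andbT; apply/eqP => Ex; rewrite Ex Eirr in Ha.
Qed.

Lemma simple_path_neq_x w c r : simple_path E x w (c :: r) -> w <> x /\ c <> x.
Proof.
move=> [_ [L /= /andP [U _]]]; split => Ex; move: U.
  by rewrite -Ex -L /= mem_last.
by rewrite Ex inE eqxx.
Qed.

Lemma outside_branch b w : w <> x -> ~ in_branch b w ->
  exists c r, simple_path E x w (c :: r) /\ c != b.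
Proof.
move=> Hw NB; have [[|c r] Sp] := connect_simple_path (Econn x w).
  by case: Sp => [_ [L _]]; case: Hw; rewrite -L.
by exists c, r; split => //; apply/eqP => Ec; apply: NB; exists r; rewrite -Ec.
Qed.

Lemma simple_path_last_edge b w r : simple_path E x w (b :: r) ->
  w = b \/ exists y, [/\ y <> x, y <> w, in_branch b y &
                        forall e : rel (vtx k), path e x (b :: r) -> e y w].
Proof.
move=> Sp; case: (Sp) => [P [L U]].
case/lastP: r Sp P L U => [|r' z] Sp P L U; first by left; rewrite -L.
right; rewrite /= last_rcons in L; subst z.
have Hy : last b r' \in b :: rcons r' w.
  by rewrite -cat1s -rcons_cat mem_rcons inE mem_last orbT.
have Hyx : last b r' <> x.
  move=> Ex; move: U => /= /andP [+ _].
  by rewrite -Ex -cat1s -rcons_cat mem_rcons inE mem_last orbT.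
exists (last b r'); split => //.
- move=> Ew; move: U; rewrite cons_uniq -rcons_cons rcons_uniq => /andP [_ /andP [+ _]].
  by rewrite -{1}Ew mem_last.
- have [[|c r2] [Sp' /= Hd]] := simple_path_prefix Sp Hy.
    by case: Sp' => [_ [L' _]]; case: Hyx; rewrite -L'.
  by subst c; exists r2.
- by move=> e; rewrite -rcons_cons rcons_path => /andP [_].
Qed.

Lemma ascending_branch_in_arc t w c r : (0 <= t < 4 * H)%Z ->
  simple_path E x w (c :: r) -> path (ascends h i t) x (c :: r) ->
  in_arc H (sector c) t /\ in_arc H (sector w) t.
Proof.
move=> Ht Sp P; split; first by move: P => /= /andP [/ascends_in_arc].
have [Hwx _] := simple_path_neq_x Sp; case: Sp => [_ [L _]].
apply: ascends_in_arc; rewrite -L; apply: (ascends_last k_eq h_pos i_bounds Ht P) => //.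
by rewrite L => Ex; case: Hwx.
Qed.

(* The tree path from [w] to [w'] passes through [x]; reading its ascending direction [t]
   backwards along the branch of [w] gives the opposite direction. *)
Lemma branch_arcs w w' a ra b rb :
  simple_path E x w (a :: ra) -> simple_path E x w' (b :: rb) -> a != b ->
  exists t, [/\ (0 <= t < 4 * H)%Z, path (ascends h i t) x (b :: rb),
    in_arc H (sector b) t, in_arc H (sector w') t & ~ in_arc H (sector w) t].
Proof.
move=> S1 S2 Hab; have [t [Ht Pt]] := E_monotone (simple_path_join Esym Eacyclic S1 S2 Hab).
case: (S1) => [_ [L1 _]]; rewrite -L1 path_rev_cat in Pt; case/andP: Pt => Pa Pb.
have Es : forall y z : vtx k, ascends h i t z y = ascends h i (opp_dir H t) y z.
  by move=> y z; exact: (ascends_rev k_eq h_pos i_bounds y z Ht).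
rewrite (eq_path Es) in Pa.
have [_ Aw] := ascending_branch_in_arc (opp_dir_bounds Ht) S1 Pa.
have [Ab Aw'] := ascending_branch_in_arc Ht S2 Pb.
have [Hwx _] := simple_path_neq_x S1.
by exists t; split => //; apply/(in_arc_opp_dir Ht (cell_bounds k_eq h_pos i_bounds (nesym Hwx))).
Qed.

Lemma sector_side w w' a ra b rb :
  simple_path E x w (a :: ra) -> simple_path E x w' (b :: rb) -> a != b ->
  (sector w < sector w' /\ sector w < sector b \/ sector w' < sector w /\ sector b < sector w)%Z.
Proof.
move=> S1 S2 Hab; have [t [Ht _ Ab Aw' Aw]] := branch_arcs S1 S2 Hab.
have [Hw _] := simple_path_neq_x S1; have [Hw' Hb] := simple_path_neq_x S2.
exact: (in_arc_sides (sector_bounds Hw') (sector_bounds Hb) (sector_bounds Hw) Ht).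
Qed.

Lemma in_branch_between b wlo whi y : in_branch b wlo -> in_branch b whi ->
  (sector wlo <= sector b <= sector whi)%Z -> y <> x ->
  (sector wlo <= sector y <= sector whi)%Z -> in_branch b y.
Proof.
move=> [rlo Slo] [rhi Shi] Hb Hy Hr; apply: NNPP => NB.
have [c [r [Sy Hc]]] := outside_branch Hy NB.
have := sector_side Sy Slo Hc; have := sector_side Sy Shi Hc; lia.
Qed.

Section Band.
Variables (b : vtx k) (lo hi : Z).
Hypothesis lo_ge : (H + 2 <= lo)%Z.
Hypothesis lo_le_hi : (lo <= hi)%Z.
Hypothesis hi_le : (hi <= 3 * H - 1)%Z.
Hypothesis b_in_band : (lo <= sector b <= hi)%Z.
Hypothesis branch_in_band : forall y, y <> x -> in_branch b y -> (lo <= sector y <= hi)%Z.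
Hypothesis band_in_branch : forall y, y <> x -> (lo <= sector y <= hi)%Z -> in_branch b y.

(* Compare the path with paths to the vertices of sectors [lo - 1] and [hi + 1], which lie
   in other branches. *)
Lemma last_edge_cell_in_band w r y : simple_path E x w (b :: r) -> y <> w ->
  (forall e : rel (vtx k), path e x (b :: r) -> e y w) -> (lo <= cell h i y w <= hi)%Z.
Proof.
move=> Sp Hyw Hlast.
have outside z : z <> x -> ~ (lo <= sector z <= hi)%Z ->
    exists c r, simple_path E x z (c :: r) /\ c != b.
  by move=> Hz Hs; apply: outside_branch => // /(branch_in_band Hz).
have [u [_ Hux _ Su]] := sector_vertex_odd (s := (lo - 1)%Z) ltac:(lia).
have [v [_ Hvx _ Sv]] := sector_vertex_odd (s := (hi + 1)%Z) ltac:(lia).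
have [cu [ru [Spu Hcu]]] := outside u Hux ltac:(lia).
have [cv [rv [Spv Hcv]]] := outside v Hvx ltac:(lia).
have [t [Ht Pt Bt _ Ut]] := branch_arcs Spu Sp Hcu.
have [t' [Ht' Pt' Bt' _ Vt']] := branch_arcs Spv Sp Hcv.
rewrite Su in Ut; rewrite Sv in Vt'.
apply: (in_arc_between lo_ge b_in_band hi_le (cell_bounds k_eq h_pos i_bounds Hyw)
  Ht Ht' Ut Bt _ Vt' Bt'); exact: ascends_in_arc (Hlast _ _).
Qed.

Lemma band_low_vertex_is_root (w1 : vtx k) : (w1 < 2 * k)%N -> w1 <> x ->
  rel_idx w1 = (2 * (lo - H) - 1)%Z -> sector w1 = lo -> w1 = b.
Proof.
move=> Hw1 Hw1x R1 S1; have [r Sp] := band_in_branch Hw1x ltac:(lia).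
case: (simple_path_last_edge Sp) => [// | [y [Hyx Hyw By Hlast]]].
have Ec := last_edge_cell_in_band Sp Hyw Hlast; have Sy := branch_in_band Hyx By.
case Hy: (y < 2 * k)%N; last first.
  by move: Ec Sy; rewrite cell_from_origin ?Hy // R1 sector_origin ?Hy //; lia.
have [Sy' Ry] := sector_polygon Hy Hyx; rewrite Sy' in Sy; rewrite cell_polygon // R1 in Ec.
case: (chord_cell_to_band_min (conj lo_ge lo_le_hi) hi_le Ry _ Sy Ec).
by move=> Ery; apply: Hyw; apply: rel_idx_inj => //; rewrite Ery R1.
Qed.

(* The last edge into the origin would come from a vertex of the band and leave the band. *)
Lemma band_origin_root (o : vtx k) : ~~ (o < 2 * k)%N -> in_branch b o -> (hi <= 2 * H)%Z -> o = b.
Proof.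
move=> Ho [r Sp] Hhi; case: (simple_path_last_edge Sp) => [// | [y [Hyx Hyo By Hlast]]].
have Ec := last_edge_cell_in_band Sp Hyo Hlast; have Sy := branch_in_band Hyx By.
case Hy: (y < 2 * k)%N; last by case: Hyo; apply: origin_unique; rewrite ?Hy.
have [Sy' Ry] := sector_polygon Hy Hyx; rewrite Sy' in Sy; rewrite cell_to_origin // in Ec.
by case: (origin_cell_notin_band (conj lo_ge lo_le_hi) Hhi Ry Sy Ec).
Qed.

Lemma band_absurd : False.
Proof.
have [w1 [Hw1 Hw1x R1 S1]] := sector_vertex_odd (s := lo) ltac:(lia).
have Hb := band_low_vertex_is_root Hw1 Hw1x R1 S1; subst w1.
have [w2 [Hw2 Hw2x R2 S2]] := sector_vertex_even (s := hi) ltac:(lia).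
have [r Sp] := band_in_branch Hw2x ltac:(lia).
case: (simple_path_last_edge Sp) => [Hw2b | [y [Hyx Hyw By Hlast]]].
  by move: R2; rewrite Hw2b R1; lia.
have Ec := last_edge_cell_in_band Sp Hyw Hlast; have Sy := branch_in_band Hyx By.
case Hy: (y < 2 * k)%N; last first.
  rewrite cell_from_origin ?Hy // R2 in Ec.
  by move: Hw1; rewrite -(band_origin_root (negbT Hy) By ltac:(lia)) Hy.
have [Sy' Ry] := sector_polygon Hy Hyx; rewrite Sy' in Sy; rewrite cell_polygon // R2 in Ec.
case: (chord_cell_to_band_max (conj lo_ge lo_le_hi) hi_le Ry _ Sy Ec).
by move=> Ery; apply: Hyw; apply: rel_idx_inj => //; rewrite Ery R2.
Qed.

End Band.

Lemma no_middle_neighbour a b c : E x a -> E x b -> E x c ->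
  ~ (sector a < sector b < sector c)%Z.
Proof.
move=> Ea Eb Ec Habc.
have Sa := neighbour_simple_path Ea; have Sb := neighbour_simple_path Eb.
have Sc := neighbour_simple_path Ec.
have Hab : a != b by apply/eqP => Eab; rewrite Eab in Habc; lia.
have Hcb : c != b by apply/eqP => Ecb; rewrite Ecb in Habc; lia.
have Bb : in_branch b b by exists [::].
have Bx w : in_branch b w -> w <> x by case=> r /simple_path_neq_x [].
have Bs w : in_branch b w -> (0 <= sector w /\ 0 <= 3 * H - sector w)%Z.
  by move=> /Bx /sector_bounds; lia.
have [wlo [[rlo Slo] Hlo]] := Z_nonneg_argmin (ex_intro _ b Bb) (fun w Bw => (Bs w Bw).1).
have [whi [[rhi Shi] Hhi]] := Z_nonneg_argmin (f := fun w => 3 * H - sector w)%Z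
  (ex_intro _ b Bb) (fun w Bw => (Bs w Bw).2).
have := Hlo b Bb; have := Hhi b Bb => /= Hbhi Hblo.
have := sector_side Sa Slo Hab; have := sector_side Sc Shi Hcb.
have := sector_bounds (Bx _ Bb); have := sector_bounds (simple_path_neq_x Sa).1.
have := sector_bounds (simple_path_neq_x Sc).1 => Rc Ra Rb Hc Ha.
apply: (@band_absurd b (sector wlo) (sector whi)); try lia.
- by move=> y Hyx By; have := Hlo y By; have := Hhi y By => /=; lia.
- by move=> y; apply: in_branch_between; [exists rlo | exists rhi | lia].
Qed.

Lemma neighbour_sectors_neq a b : E x a -> E x b -> a != b -> sector a <> sector b.
Proof.
move=> Ea Eb Hab.
by have := sector_side (neighbour_simple_path Ea) (neighbour_simple_path Eb) Hab; lia.
Qed.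

Lemma degree_le2 : (degree E x <= 2)%N.
Proof.
rewrite leqNgt; apply/negP => /card_gt2P [a [b [c [[Ha Hb Hc] [Hab Hbc Hca]]]]].
rewrite !inE in Ha Hb Hc.
have := neighbour_sectors_neq Ha Hb Hab; have := neighbour_sectors_neq Hb Hc Hbc.
have := neighbour_sectors_neq Hc Ha Hca.
have := no_middle_neighbour Ha Hb Hc; have := no_middle_neighbour Ha Hc Hb.
have := no_middle_neighbour Hb Ha Hc; have := no_middle_neighbour Hb Hc Ha.
have := no_middle_neighbour Hc Ha Hb; have := no_middle_neighbour Hc Hb Ha.
lia.
Qed.

End Branches.

Theorem lemma12 (k : nat) (hk : (2 <= k)%N) (hev : ~~ odd k)
  (E : rel (vtx k)) (hmin : min_D_monotone_tree E)
  (x : vtx k) (hx : (nat_of_ord x < 2 * k)%N) :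
  (degree E x <= 2)%N.
Proof.
case: hmin => [[[Esym [Eirr [Econn Eacyclic]]] Hmono] _].
have k_eq : k = (2 * k./2)%N by rewrite mul2n even_halfK.
have h_pos : (0 < k./2)%N by lia.
have x_bounds : (0 <= Z.of_nat x < 4 * Z.of_nat k./2)%Z by lia.
apply: (degree_le2 k_eq h_pos hx Esym Eirr Eacyclic Econn) => u v p Sp.
have [j [Hj Hall]] := Hmono u v.
exact: (monotone_path_ascends k_eq h_pos x_bounds Hj Eirr Sp.1 (Hall p Sp)).
Qed.
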